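(* Let $S$ be a closed, densely defined symmetric operator in a Hilbert space $\mathfrak{H}$ with equal deficiency indices, and let $J$ be a fundamental symmetry in $\mathfrak{H}$ commuting with $S$. Then there exists a unitary mapping $Q:\mathfrak{N}_{i}\to\mathfrak{N}_{-i}$ for which the boundary operators $\Gamma_0,\Gamma_1$ defined below satisfy $\Gamma_0 J=J\Gamma_0$ and $\Gamma_1 J=J\Gamma_1$ on $\mathcal{D}(S^* )$ if and only if there exists at least one self-adjoint extension of $S$ commuting with $J$.
   Context: A fundamental symmetry is a bounded operator $J$ with $J=J^*$, $J^2=I$. ''$J$ commutes with an operator $T$'' means $J\mathcal{D}(T)\subset\mathcal{D}(T)$ and $JTu=TJu$ for $u\in\mathcal{D}(T)$. Defect subspaces: $\mathfrak{N}_i=\mathfrak{H}\ominus\mathcal{R}(S-iI)$, $\mathfrak{N}_{-i}=\mathfrak{H}\ominus\mathcal{R}(S+iI)$; since $SJ=JS$, these subspaces are invariant under $J$. By von Neumann's formula every $\psi\in\mathcal{D}(S^* )$ decomposes uniquely as $\psi=u+f_{-i}+f_i$ with $u\in\mathcal{D}(S)$, $f_{\pm i}\in\mathfrak{N}_{\pm i}$. For a unitary $Q:\mathfrak{N}_i\to\mathfrak{N}_{-i}$ define $\Gamma_0,\Gamma_1:\mathcal{D}(S^* )\to\mathfrak{N}_{-i}$ by $\Gamma_0\psi=f_{-i}+Qf_i$, $\Gamma_1\psi=if_{-i}-iQf_i$ (the triplet $(\mathfrak{N}_{-i},\Gamma_0,\Gamma_1)$ is then a boundary triplet of $S^*$).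 *)

From HB Require Import structures.
From mathcomp Require Import all_boot all_order all_algebra.
From mathcomp Require Import complex.
From mathcomp Require Import reals.
From Stdlib Require Import ClassicalEpsilon.
Set Implicit Arguments. Unset Strict Implicit. Unset Printing Implicit Defensive.
Import Order.TTheory GRing.Theory Num.Theory.
Local Open Scope ring_scope.

Section Hilbert.
Variables (R : realType) (V : lmodType R[i]) (ip : V -> V -> R[i]).

Definition is_inner_product : Prop :=
  [/\ (forall (a : R[i]) (x y z : V), ip (a *: x + y) z = a * ip x z + ip y z),
      (forall x y : V, ip y x = conjc (ip x y)),
      (forall x : V, 0 <= ip x x) &
      (forall x : V, ip x x = 0 -> x = 0)].

Definition sqnorm (x : V) : R := complex.Re (ip x x).

Definition converges_to (u : nat -> V) (l : V) : Prop :=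
  forall e : R, 0 < e -> exists N : nat, forall n, (N <= n)%N -> sqnorm (u n - l) < e.

Definition cauchy_seq (u : nat -> V) : Prop :=
  forall e : R, 0 < e -> exists N : nat,
    forall m n, (N <= m)%N -> (N <= n)%N -> sqnorm (u m - u n) < e.

Definition hilbert_complete : Prop :=
  forall u : nat -> V, cauchy_seq u -> exists l, converges_to u l.

(* A (possibly unbounded) linear operator: a domain together with a map;
   values outside the domain are irrelevant. *)
Record operator := Operator { dom : V -> Prop; app : V -> V }.

Definition is_linear_operator (T : operator) : Prop :=
  dom T 0 /\
  forall (a : R[i]) (x y : V), dom T x -> dom T y ->
    dom T (a *: x + y) /\ app T (a *: x + y) = a *: app T x + app T y.

Definition densely_defined (T : operator) : Prop :=
  forall (v : V) (e : R), 0 < e -> exists x, dom T x /\ sqnorm (v - x) < e.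

Definition closed_operator (T : operator) : Prop :=
  forall (u : nat -> V) (x y : V), (forall n, dom T (u n)) ->
    converges_to u x -> converges_to (fun n => app T (u n)) y ->
    dom T x /\ app T x = y.

Definition symmetric_operator (T : operator) : Prop :=
  forall x y, dom T x -> dom T y -> ip (app T x) y = ip x (app T y).

Definition adjoint_graph (T : operator) (y z : V) : Prop :=
  forall x, dom T x -> ip (app T x) y = ip x z.

Definition adjoint_dom (T : operator) (y : V) : Prop :=
  exists z, adjoint_graph T y z.

Definition self_adjoint (A : operator) : Prop :=
  forall y z, adjoint_graph A y z <-> (dom A y /\ z = app A y).

Definition extends (A T : operator) : Prop :=
  forall x, dom T x -> dom A x /\ app A x = app T x.

(* Defect subspaces N_i = H (-) R(S - iI), N_{-i} = H (-) R(S + iI) *)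
Definition defect_i (S : operator) (f : V) : Prop :=
  forall x, dom S x -> ip (app S x - 'i%C *: x) f = 0.
Definition defect_mi (S : operator) (f : V) : Prop :=
  forall x, dom S x -> ip (app S x + 'i%C *: x) f = 0.

Definition orthonormal_basis (N : V -> Prop) (B : V -> Prop) : Prop :=
  [/\ (forall b, B b -> N b),
      (forall b, B b -> ip b b = 1),
      (forall b c, B b -> B c -> b <> c -> ip b c = 0) &
      (forall v, N v -> (forall b, B b -> ip v b = 0) -> v = 0)].

Definition same_hilbert_dim (N M : V -> Prop) : Prop :=
  exists (B C : V -> Prop) (g : V -> V),
    [/\ orthonormal_basis N B, orthonormal_basis M C,
        (forall b, B b -> C (g b)),
        (forall b b', B b -> B b' -> g b = g b' -> b = b') &
        (forall c, C c -> exists2 b, B b & g b = c)].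

Definition equal_deficiency_indices (S : operator) : Prop :=
  same_hilbert_dim (defect_i S) (defect_mi S).

Definition fundamental_symmetry (J : V -> V) : Prop :=
  [/\ (forall (a : R[i]) x y, J (a *: x + y) = a *: J x + J y),
      (exists M : R, forall x, sqnorm (J x) <= M * sqnorm x),
      (forall x y, ip (J x) y = ip x (J y)) &
      (forall x, J (J x) = x)].

Definition commutes_with (J : V -> V) (T : operator) : Prop :=
  forall u, dom T u -> dom T (J u) /\ app T (J u) = J (app T u).

Definition unitary_defect (S : operator) (Q : V -> V) : Prop :=
  [/\ (forall (a : R[i]) f g, defect_i S f -> defect_i S g ->
          Q (a *: f + g) = a *: Q f + Q g),
      (forall f, defect_i S f -> defect_mi S (Q f)),
      (forall f g, defect_i S f -> defect_i S g -> ip (Q f) (Q g) = ip f g) &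
      (forall h, defect_mi S h -> exists2 f, defect_i S f & Q f = h)].

(* von Neumann decomposition psi = u + f_{-i} + f_i *)
Definition vN_decomp (S : operator) (psi : V) (t : V * V * V) : Prop :=
  [/\ dom S t.1.1, defect_mi S t.1.2, defect_i S t.2 &
      psi = t.1.1 + t.1.2 + t.2].

(* the (unique, for psi in D(S^* )) decomposition, chosen by epsilon *)
Definition vN_choose (S : operator) (psi : V) : V * V * V :=
  epsilon (inhabits (0, 0, 0)) (vN_decomp S psi).

Definition Gamma0 (S : operator) (Q : V -> V) (psi : V) : V :=
  let t := vN_choose S psi in t.1.2 + Q t.2.

Definition Gamma1 (S : operator) (Q : V -> V) (psi : V) : V :=
  let t := vN_choose S psi in 'i%C *: t.1.2 - 'i%C *: Q t.2.

End Hilbert.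

From HB Require Import structures.
From mathcomp Require Import all_boot all_order all_algebra.
From mathcomp Require Import complex.
From mathcomp Require Import classical_sets reals ring lra.
From Stdlib Require Import ClassicalEpsilon.
Import Order.TTheory GRing.Theory Num.Theory.
Set Implicit Arguments. Unset Strict Implicit.
Local Open Scope ring_scope.

(* Von Neumann's theory: the self-adjoint extensions of S are exactly the restrictions of
   S^* to D(S) + (I - Q) N_i for unitary Q : N_i -> N_{-i}; conversely a self-adjoint
   extension A determines Q, since each f in N_i is paired in D(A) with exactly one
   component -Q f in N_{-i} (Green's identity makes this pairing isometric, and the
   surjectivity of A -+ i makes it total and onto).  As J commutes with S it preserves
   D(S), N_i, N_{-i} and hence the von Neumann decomposition, so Gamma_0 and Gamma_1
   commute with J exactly when QJ = JQ on N_i, which is exactly when J preserves the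
   domain of the extension attached to Q.  The analytic input is the projection theorem,
   applied to the closed ranges of S + i and A +- i. *)

Section ComplexFacts.
Variable R : realType.
Implicit Types a b : R[i].

Lemma conjc_i : conjc ('i%C : R[i]) = - 'i%C.
Proof. by apply/eqP; rewrite eq_complex /= oppr0 !eqxx. Qed.

(* Restated so that rewriting produces the plain [conjc] and [%:C] forms rather than
   the morphism structures, which later rewrite rules would not match. *)
Lemma conjcD a b : conjc (a + b) = conjc a + conjc b. Proof. exact: rmorphD. Qed.
Lemma conjcN a : conjc (- a) = - conjc a. Proof. exact: rmorphN. Qed.
Lemma conjcM a b : conjc (a * b) = conjc a * conjc b. Proof. exact: rmorphM. Qed.

Lemma real_complexB (x y : R) : ((x - y)%:C)%C = (x%:C)%C - (y%:C)%C :> R[i].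
Proof. exact: rmorphB. Qed.
Lemma real_complexM (x y : R) : ((x * y)%:C)%C = (x%:C)%C * (y%:C)%C :> R[i].
Proof. exact: rmorphM. Qed.

Lemma mulii : ('i%C : R[i]) * 'i%C = -1.
Proof. by rewrite -expr2 sqr_i. Qed.

Lemma two_i_neq0 : 2%:R * ('i%C : R[i]) != 0.
Proof. by rewrite mulf_eq0 negb_or pnatr_eq0 eq_complex /= oner_eq0 andbF. Qed.

Lemma conjc_eqN_Re0 a : conjc a = - a -> complex.Re a = 0.
Proof. by case: a => x y /eqP; rewrite eq_complex /= => /andP [/eqP h _]; lra. Qed.

Lemma conjc_fixed_real a : conjc a = a -> a = ((complex.Re a)%:C)%C.
Proof.
case: a => x y /eqP; rewrite eq_complex /= eqxx /= => /eqP h.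
by have -> : y = 0 by lra.
Qed.

Definition normc2 a : R := complex.Re (a * conjc a).

Lemma normc2E a : normc2 a = complex.Re a ^+ 2 + complex.Im a ^+ 2.
Proof. by case: a => x y; rewrite /normc2 /= !expr2; lra. Qed.

Lemma normc2_ge0 a : 0 <= normc2 a.
Proof. by rewrite normc2E addr_ge0 ?sqr_ge0. Qed.

Lemma normc2_eq0 a : normc2 a = 0 -> a = 0.
Proof.
case: a => x y; rewrite normc2E /= => h.
have hx : x ^+ 2 = 0 by apply/eqP; rewrite eq_le sqr_ge0 andbT; have := sqr_ge0 y; lra.
have hy : y ^+ 2 = 0 by lra.
by move/eqP: hx; move/eqP: hy; rewrite !sqrf_eq0 => /eqP -> /eqP ->.
Qed.

Lemma mulcJ_normc2 a : a * conjc a = ((normc2 a)%:C)%C.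
Proof.
by case: a => x y; rewrite /normc2 /=; apply/eqP; rewrite eq_complex /=; apply/andP; split; apply/eqP; lra.
Qed.

Lemma normc2N a : normc2 (- a) = normc2 a.
Proof. by rewrite !normc2E !raddfN /= !sqrrN. Qed.

Lemma normc2_realM (t : R) a : normc2 ((t%:C)%C * a) = t ^+ 2 * normc2 a.
Proof. by rewrite !normc2E; case: a => x y /=; rewrite !mul0r !subr0 !addr0; ring. Qed.

Lemma normc2D_le a b : normc2 (a + b) <= 2 * normc2 a + 2 * normc2 b.
Proof.
case: a => a1 a2; case: b => b1 b2; rewrite !normc2E /=.
have := sqr_ge0 (a1 - b1); have := sqr_ge0 (a2 - b2); rewrite !expr2; nra.
Qed.

Lemma eq0_of_normc2_small a : (forall e : R, 0 < e -> normc2 a < e) -> a = 0.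
Proof.
move=> h; apply: normc2_eq0; apply/eqP; rewrite eq_le normc2_ge0 andbT leNgt.
by apply/negP => /h; rewrite ltxx.
Qed.

Lemma Re_realM a (t : R) : complex.Re ((t%:C)%C * a) = t * complex.Re a.
Proof. by case: a => x y /=; rewrite mul0r subr0. Qed.

Lemma Re_mul_real a (t : R) : complex.Re (a * (t%:C)%C) = complex.Re a * t.
Proof. by case: a => x y /=; rewrite mulr0 subr0. Qed.

Lemma ReN a : complex.Re (- a) = - complex.Re a.
Proof. by case: a. Qed.

Lemma Re_conjc a : complex.Re (conjc a) = complex.Re a.
Proof. by case: a. Qed.

End ComplexFacts.

Section InnerProduct.
Variables (R : realType) (V : lmodType R[i]) (ip : V -> V -> R[i]).
Hypothesis Hip : is_inner_product ip.
Local Notation sq := (sqnorm ip).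
Local Notation Re := (@complex.Re R).

Lemma ipC x y : ip y x = conjc (ip x y).
Proof. by case: Hip => _ h _ _; apply: h. Qed.
Lemma ipDl x y z : ip (x + y) z = ip x z + ip y z.
Proof. by case: Hip => h _ _ _; rewrite -{1}(scale1r x) h mul1r. Qed.
Lemma ip0l z : ip 0 z = 0.
Proof. by apply: (addrI (ip 0 z)); rewrite -ipDl !addr0. Qed.
Lemma ipZl a x z : ip (a *: x) z = a * ip x z.
Proof. by case: Hip => h _ _ _; rewrite -(addr0 (a *: x)) h ip0l addr0. Qed.
Lemma ipNl x z : ip (- x) z = - ip x z.
Proof. by rewrite -scaleN1r ipZl mulN1r. Qed.
Lemma ipBl x y z : ip (x - y) z = ip x z - ip y z.
Proof. by rewrite ipDl ipNl. Qed.
Lemma ipDr z x y : ip z (x + y) = ip z x + ip z y.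
Proof. by rewrite ipC ipDl conjcD -!ipC. Qed.
Lemma ip0r z : ip z 0 = 0.
Proof. by rewrite ipC ip0l conjc0. Qed.
Lemma ipZr z a x : ip z (a *: x) = conjc a * ip z x.
Proof. by rewrite ipC ipZl conjcM -ipC. Qed.
Lemma ipNr z x : ip z (- x) = - ip z x.
Proof. by rewrite ipC ipNl conjcN -ipC. Qed.
Lemma ipBr z x y : ip z (x - y) = ip z x - ip z y.
Proof. by rewrite ipDr ipNr. Qed.

Lemma ipxx_eq0 x : ip x x = 0 -> x = 0.
Proof. by case: Hip => _ _ _; apply. Qed.

Lemma eq_ipr x y : (forall t, ip t x = ip t y) -> x = y.
Proof.
move=> h; apply/eqP; rewrite -subr_eq0; apply/eqP/ipxx_eq0.
by rewrite ipBr h subrr.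
Qed.

Lemma ipxx x : ip x x = ((sq x)%:C)%C.
Proof.
case: Hip => _ _ h _; move: (h x); rewrite /sqnorm lecE.
by case: (ip x x) => a b /= /andP [/eqP -> _].
Qed.
Lemma sq_ge0 x : 0 <= sq x.
Proof. by case: Hip => _ _ h _; move: (h x); rewrite ipxx lecR. Qed.
Lemma sq_eq0 x : sq x = 0 -> x = 0.
Proof. by move=> h; apply: ipxx_eq0; rewrite ipxx h. Qed.
Lemma sq0 : sq 0 = 0.
Proof. by rewrite /sqnorm ip0l. Qed.

Lemma sqD x y : sq (x + y) = sq x + sq y + 2 * Re (ip x y).
Proof.
have := ipxx (x + y); rewrite ipDl !ipDr !ipxx (ipC x y) => /(congr1 Re).
by rewrite /= !raddfD /= Re_conjc => <-; lra.
Qed.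
Lemma sqN x : sq (- x) = sq x.
Proof. by rewrite /sqnorm ipNl ipNr opprK. Qed.
Lemma sqB x y : sq (x - y) = sq x + sq y - 2 * Re (ip x y).
Proof. by rewrite sqD sqN ipNr raddfN; lra. Qed.
Lemma sqZ a x : sq (a *: x) = normc2 a * sq x.
Proof. by rewrite /sqnorm ipZl ipZr mulrA mulcJ_normc2 ipxx -real_complexM. Qed.
Lemma sqZ_real (t : R) x : sq ((t%:C)%C *: x) = t ^+ 2 * sq x.
Proof. by rewrite sqZ normc2E /= expr0n /= addr0. Qed.

Lemma young (t : R) x y : 2 * t * Re (ip x y) <= t ^+ 2 * sq x + sq y.
Proof. by have := sq_ge0 ((t%:C)%C *: x - y); rewrite sqB sqZ_real ipZl Re_realM; lra. Qed.

Lemma sqD_le x y : sq (x + y) <= 2 * sq x + 2 * sq y.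
Proof. by have := young 1 x y; rewrite sqD; lra. Qed.

Lemma cauchy_schwarz x y : normc2 (ip x y) <= sq x * sq y.
Proof.
have [hy|hy] := eqVneq (sq y) 0.
  by rewrite (sq_eq0 hy) ip0r sq0 mulr0 /normc2 mul0r.
have hpos : 0 < sq y by rewrite lt_neqAle eq_sym hy sq_ge0.
set p := ip x y.
have := sq_ge0 (((sq y)%:C)%C *: x - p *: y).
have -> : sq (((sq y)%:C)%C *: x - p *: y) = sq y * (sq y * sq x - normc2 p).
  apply: (@complexI R); rewrite -(ipxx (_ - _)) !ipBl !ipBr !ipZl !ipZr !ipxx (ipC x y) -/p conjc_real.
  by rewrite !real_complexM real_complexB real_complexM -!mulcJ_normc2 ?conjcK; ring.
by rewrite pmulr_rge0 // subr_ge0 mulrC.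
Qed.
End InnerProduct.

Ltac ip_expand Hip := repeat progress rewrite ?(ipDr Hip) ?(ipBr Hip) ?(ipNr Hip) ?(ipZr Hip)
  ?(ipDl Hip) ?(ipBl Hip) ?(ipNl Hip) ?(ipZl Hip) ?(ip0l Hip) ?(ip0r Hip)
  ?conjcD ?conjcM ?conjcN ?conjcK ?conjc_i ?conjc_real.

Lemma subrBB (G : zmodType) (x y z : G) : (x - z) - (y - z) = x - y.
Proof. by rewrite opprB subrKA. Qed.

Section Convergence.
Variables (R : realType) (V : lmodType R[i]) (ip : V -> V -> R[i]).
Hypothesis Hip : is_inner_product ip.
Local Notation sq := (sqnorm ip).
Local Notation Re := (@complex.Re R).

Lemma inv_nat_small (e : R) : 0 < e -> exists N : nat, forall n, (N <= n)%N -> (n.+1%:R)^-1 < e.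
Proof.
move=> he; exists (Num.bound e^-1) => n hn.
rewrite invf_plt ?posrE ?ltr0n //; apply: lt_le_trans (archi_boundP _) _.
  by rewrite invr_ge0 ltW.
by rewrite ler_nat (leq_trans hn).
Qed.

Lemma sqB_le x y : sq (x - y) <= 2 * sq x + 2 * sq y.
Proof. by rewrite -(sqN Hip y) sqD_le. Qed.

Lemma cvg_cauchy u l : converges_to ip u l -> cauchy_seq ip u.
Proof.
move=> hu e he; have [N hN] := hu (e / 4) (divr_gt0 he (ltr0Sn _ _)).
exists N => m n hm hn; have := sqB_le (u m - l) (u n - l).
rewrite subrBB; have := hN m hm; have := hN n hn; lra.
Qed.

Lemma cvg_unique u l l' : converges_to ip u l -> converges_to ip u l' -> l = l'.
Proof.
move=> hl hl'; apply/eqP; rewrite -subr_eq0; apply/eqP/(sq_eq0 Hip)/eqP.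
rewrite eq_le sq_ge0 // andbT; apply/ler_addgt0Pr => e he.
have [N hN] := hl (e / 4) (divr_gt0 he (ltr0Sn _ _)).
have [N' hN'] := hl' (e / 4) (divr_gt0 he (ltr0Sn _ _)).
have := hN _ (leq_maxl N N'); have := hN' _ (leq_maxr N N').
have := sqB_le (l - u (maxn N N')) (l' - u (maxn N N')).
by rewrite subrBB -(sqN Hip (l - _)) -(sqN Hip (l' - _)) !opprB; lra.
Qed.

Lemma cvgDZ a u v l l' : converges_to ip u l -> converges_to ip v l' ->
  converges_to ip (fun n => u n + a *: v n) (l + a *: l').
Proof.
move=> hu hv e he; pose k := 4 * (normc2 a + 1).
have hk : 0 < k by rewrite mulr_gt0 // ltr_pwDr ?normc2_ge0.
have [N hN] := hu (e / 4) (divr_gt0 he (ltr0Sn _ _)).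
have [N' hN'] := hv (e / k) (divr_gt0 he hk).
exists (maxn N N') => n hn.
have := hN _ (leq_trans (leq_maxl N N') hn); have := hN' _ (leq_trans (leq_maxr N N') hn).
have := sqD_le Hip (u n - l) (a *: (v n - l')).
have -> : u n - l + a *: (v n - l') = u n + a *: v n - (l + a *: l').
  by rewrite scalerBr opprD addrACA.
rewrite sqZ // => hle h1 h2; apply: le_lt_trans hle _.
have h3 : normc2 a * sq (v n - l') <= (normc2 a + 1) * (e / k).
  by apply: ler_pM; rewrite ?normc2_ge0 ?sq_ge0 ?ltW // ltrDl.
have : (normc2 a + 1) * (e / k) = e / 4.
  by rewrite /k; field; rewrite gt_eqF // ltr_pwDr ?normc2_ge0.
by lra.
Qed.

Lemma sq_le_of_cvg w u l (d : R) : converges_to ip u l ->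
  (forall n, sq (w - u n) <= d + (n.+1%:R)^-1) -> sq (w - l) <= d.
Proof.
move=> hu hd; apply/ler_addgt0Pr => e he; set x := w - l; pose t := e / (4 * (sq x + 1)).
have hx := sq_ge0 Hip x.
have ht : 0 < t by rewrite divr_gt0 // mulr_gt0 //; lra.
have htx : t * sq x <= e / 4.
  have <- : t * (sq x + 1) = e / 4 by rewrite /t; field; rewrite gt_eqF //; lra.
  by rewrite ler_pM2l // lerDl.
have [N hN] := hu (t * e / 4) (divr_gt0 (mulr_gt0 ht he) (ltr0Sn _ _)).
have [N' hN'] := inv_nat_small (divr_gt0 he (ltr0Sn _ 1) : 0 < e / 2).
pose n := maxn N N'; pose y := u n - l.
have hy : sq y < t * e / 4 := hN _ (leq_maxl N N').
have hn : (n.+1%:R)^-1 < e / 2 := hN' _ (leq_maxr N N').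
have hyoung := young Hip t x y.
have hRe : 2 * Re (ip x y) <= e / 2.
  have htx2 : t ^+ 2 * sq x <= t * (e / 4) by rewrite expr2 -mulrA ler_pM2l.
  have h : t * (2 * Re (ip x y)) <= t * (e / 2) by lra.
  by rewrite ler_pM2l in h.
have := hd n; have := sqB Hip x y; have := sq_ge0 Hip y.
by rewrite [x - y]subrBB; move: hn; move: (n.+1%:R^-1 : R) => r; lra.
Qed.
End Convergence.

Section Projection.
Variables (R : realType) (V : lmodType R[i]) (ip : V -> V -> R[i]).
Hypotheses (Hip : is_inner_product ip) (Hcompl : hilbert_complete ip).
Local Notation sq := (sqnorm ip).
Variable M : V -> Prop.
Hypotheses (M0 : M 0) (ML : forall a x y, M x -> M y -> M (a *: x + y))
  (Mclosed : forall u l, (forall n, M (u n)) -> converges_to ip u l -> M l).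

Lemma best_approx_orth w m : M m -> (forall m', M m' -> sq (w - m) <= sq (w - m')) ->
  forall m', M m' -> ip m' (w - m) = 0.
Proof.
move=> hm hmin m' hm'; set p := ip (w - m) m'.
rewrite (ipC Hip) -/p; suff /normc2_eq0 -> : normc2 p = 0 by rewrite conjc0.
set K := sq m'; have hK : 0 <= K := sq_ge0 Hip m'.
set t := (K + 1)^-1.
have ht : t * (K + 1) = 1 by rewrite /t mulVf // gt_eqF //; lra.
have ht0 : 0 < t by rewrite /t invr_gt0; lra.
have := hmin _ (ML ((t%:C)%C * p) hm' hm).
(* The competitor [m + t p m'] lowers the distance by about [t |p|^2]. *)
have -> : w - ((t%:C)%C * p *: m' + m) = (w - m) - ((t%:C)%C * p) *: m' by rewrite opprD addrA addrAC.
rewrite (sqB Hip (w - m)) (sqZ Hip) (ipZr Hip) -/p -/K normc2_realM conjcM conjc_real.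
rewrite -(mulrA (t%:C)%C) (mulrC (conjc p) p) mulcJ_normc2 Re_realM.
have hP := normc2_ge0 p; move: (normc2 p) hP => P hP hle.
have htK : t * K = 1 - t by move: ht; rewrite mulrDr mulr1; lra.
have e : t ^+ 2 * P * K = t * P - t ^+ 2 * P.
  by rewrite expr2 -mulrA (mulrC P) mulrA -(mulrA t t K) htK; ring.
rewrite e in hle; change (complex.Re (P%:C)%C) with P in hle.
have h1 : 0 <= t * P by apply: mulr_ge0; lra.
have h2 : 0 <= t ^+ 2 * P by rewrite mulr_ge0 ?sqr_ge0.
have /eqP : t * P = 0 by lra.
by rewrite mulf_eq0 gt_eqF //= => /eqP.
Qed.

Lemma minimizers_close w (del e1 e2 : R) m1 m2 : M m1 -> M m2 ->
  (forall m, M m -> del <= sq (w - m)) ->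
  sq (w - m1) <= del + e1 -> sq (w - m2) <= del + e2 -> sq (m1 - m2) <= 2 * e1 + 2 * e2.
Proof.
move=> hm1 hm2 hdel h1 h2; pose h := (((2 : R)^-1)%:C)%C.
have hmid : M (h *: m1 + h *: m2).
  by apply: ML hm1 _; rewrite -[h *: m2]addr0; apply: ML hm2 M0.
have hmidle := hdel _ hmid.
(* parallelogram law for [w - m1] and [w - m2] *)
have hsum : sq ((w - m1) + (w - m2)) = 4 * sq (w - (h *: m1 + h *: m2)).
  have -> : (w - m1) + (w - m2) = ((2%:C)%C : R[i]) *: (w - (h *: m1 + h *: m2)).
    by apply: (eq_ipr Hip) => t; ip_expand Hip; rewrite /h fmorphV; field.
  by rewrite (sqZ_real Hip) expr2 -natrM.
have := sqD Hip (w - m1) (w - m2); have := sqB Hip (w - m2) (w - m1).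
have -> : (w - m2) - (w - m1) = m1 - m2 by rewrite opprB addrC subrKA.
by rewrite (ipC Hip (w - m1)) Re_conjc; lra.
Qed.

Lemma orth_projection w : exists2 m, M m & forall m', M m' -> ip m' (w - m) = 0.
Proof.
pose E := fun d : R => exists2 m, M m & d = sq (w - m).
have hE : has_inf E.
  by split; [exists (sq (w - 0)), 0 | exists 0 => d [m _ ->]; apply: sq_ge0].
pose del := inf E.
have hdel : forall m, M m -> del <= sq (w - m) by move=> m hm; apply: (ge_inf hE.2); exists m.
have hseq : forall n : nat, exists m, M m /\ sq (w - m) <= del + (n.+1%:R)^-1.
  move=> n; have hn : 0 < (n.+1%:R : R)^-1 by rewrite invr_gt0.
  have [d [m hm ->] hd] := inf_adherent hn hE.
  by exists m; split => //; apply: ltW.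
have [ms hms] := choice _ hseq.
have hcauchy : cauchy_seq ip ms.
  move=> e he; have [N hN] := inv_nat_small (divr_gt0 he (ltr0Sn _ 3) : 0 < e / 4).
  exists N => p q hp hq; have [hp1 hp2] := hms p; have [hq1 hq2] := hms q.
  apply: le_lt_trans (minimizers_close hp1 hq1 hdel hp2 hq2) _.
  move: (hN p hp) (hN q hq); move: (p.+1%:R^-1 : R) (q.+1%:R^-1 : R) => r s; lra.
have [m hm] := Hcompl hcauchy.
have hMm : M m by apply: Mclosed hm => n; case: (hms n).
exists m => //; apply: best_approx_orth => // m' hm'.
apply: le_trans (hdel _ hm'); apply: (sq_le_of_cvg Hip hm) => n; exact: (hms n).2.
Qed.
End Projection.

Section LinearOperator.
Variables (R : realType) (V : lmodType R[i]).
Variable T : operator V.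
Hypothesis HTlin : is_linear_operator T.

Lemma dom0 : dom T 0. Proof. by case: HTlin. Qed.
Lemma domL a x y : dom T x -> dom T y -> dom T (a *: x + y).
Proof. by case: HTlin => _ h hx hy; case: (h a x y hx hy). Qed.
Lemma appL a x y : dom T x -> dom T y -> app T (a *: x + y) = a *: app T x + app T y.
Proof. by case: HTlin => _ h hx hy; case: (h a x y hx hy). Qed.
Lemma app0 : app T 0 = 0.
Proof.
have := appL 1 dom0 dom0; rewrite !scale1r addr0 => /eqP.
by rewrite -subr_eq0 opprD addrA subrr sub0r oppr_eq0 => /eqP.
Qed.
Lemma domZ a x : dom T x -> dom T (a *: x).
Proof. by move=> hx; rewrite -(addr0 (a *: x)); apply: domL hx dom0. Qed.
Lemma appZ a x : dom T x -> app T (a *: x) = a *: app T x.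
Proof. by move=> hx; rewrite -(addr0 (a *: x)) (appL _ hx dom0) app0 addr0. Qed.
Lemma domD x y : dom T x -> dom T y -> dom T (x + y).
Proof. by move=> hx; rewrite -(scale1r x); apply: domL. Qed.
Lemma appD x y : dom T x -> dom T y -> app T (x + y) = app T x + app T y.
Proof. by move=> hx hy; rewrite -(scale1r x) appL // !scale1r. Qed.
Lemma domN x : dom T x -> dom T (- x).
Proof. by move=> hx; rewrite -scaleN1r; apply: domZ. Qed.
Lemma appN x : dom T x -> app T (- x) = - app T x.
Proof. by move=> hx; rewrite -scaleN1r appZ // scaleN1r. Qed.
Lemma domB x y : dom T x -> dom T y -> dom T (x - y).
Proof. by move=> hx hy; apply: domD => //; apply: domN. Qed.
Lemma appB x y : dom T x -> dom T y -> app T (x - y) = app T x - app T y.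
Proof. by move=> hx hy; rewrite appD ?appN //; apply: domN. Qed.
End LinearOperator.

Section Adjoint.
Variables (R : realType) (V : lmodType R[i]) (ip : V -> V -> R[i]).
Hypothesis Hip : is_inner_product ip.
Local Notation sq := (sqnorm ip).
Variable T : operator V.

Lemma adj0 : adjoint_graph ip T 0 0.
Proof. by move=> x _; rewrite !(ip0r Hip). Qed.
Lemma adjL a y z y' z' : adjoint_graph ip T y z -> adjoint_graph ip T y' z' ->
  adjoint_graph ip T (a *: y + y') (a *: z + z').
Proof. by move=> h h' x hx; rewrite !(ipDr Hip) !(ipZr Hip) h // h'. Qed.
Lemma adjD y z y' z' : adjoint_graph ip T y z -> adjoint_graph ip T y' z' ->
  adjoint_graph ip T (y + y') (z + z').
Proof. by move=> h h'; have := adjL 1 h h'; rewrite !scale1r. Qed.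
Lemma adjN y z : adjoint_graph ip T y z -> adjoint_graph ip T (- y) (- z).
Proof. by move=> h; have := adjL (-1) h adj0; rewrite !addr0 !scaleN1r. Qed.
Lemma adjB y z y' z' : adjoint_graph ip T y z -> adjoint_graph ip T y' z' ->
  adjoint_graph ip T (y - y') (z - z').
Proof. by move=> h h'; apply: adjD => //; apply: adjN. Qed.

Lemma adjoint_graph_closed u v y z : (forall n, adjoint_graph ip T (u n) (v n)) ->
  converges_to ip u y -> converges_to ip v z -> adjoint_graph ip T y z.
Proof.
move=> huv hu hv x hx; apply/eqP; rewrite -subr_eq0; apply/eqP/eq0_of_normc2_small => e he.
set K := sq (app T x) + sq x + 1.
have hK : 0 < K by rewrite /K; have := sq_ge0 Hip (app T x); have := sq_ge0 Hip x; lra.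
have [N hN] := hu (e / (4 * K)) (divr_gt0 he (mulr_gt0 (ltr0Sn _ 3) hK)).
have [N' hN'] := hv (e / (4 * K)) (divr_gt0 he (mulr_gt0 (ltr0Sn _ 3) hK)).
pose n := maxn N N'.
have -> : ip (app T x) y - ip x z = ip (app T x) (y - u n) - ip x (z - v n).
  by rewrite !(ipBr Hip) huv //; ring.
apply: le_lt_trans (normc2D_le _ _) _; rewrite normc2N.
have := cauchy_schwarz Hip (app T x) (y - u n); have := cauchy_schwarz Hip x (z - v n).
rewrite -(sqN Hip (y - _)) -(sqN Hip (z - _)) !opprB.
have := hN _ (leq_maxl N N'); have := hN' _ (leq_maxr N N').
have hKe : K * (e / (4 * K)) = e / 4 by field; rewrite gt_eqF.
have := sq_ge0 Hip (app T x); have := sq_ge0 Hip x.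
move: (sq (u n - y)) (sq (v n - z)) (e / (4 * K)) hKe; rewrite /K => a b s hKe hx0 hTx0 hb ha hcs1 hcs2.
have : sq (app T x) * a <= sq (app T x) * s by rewrite ler_wpM2l // ltW.
have : sq x * b <= sq x * s by rewrite ler_wpM2l // ltW.
have : 0 < s by nra.
lra.
Qed.

Hypothesis HTdense : densely_defined ip T.

Lemma dense_orth w : (forall x, dom T x -> ip x w = 0) -> w = 0.
Proof.
move=> h; apply: (sq_eq0 Hip); apply/eqP; rewrite eq_le sq_ge0 // andbT.
rewrite leNgt; apply/negP => hpos; have [x [hx]] := HTdense w hpos.
by rewrite (sqB Hip) (ipC Hip) h // conjc0 /=; have := sq_ge0 Hip x; lra.
Qed.

Lemma adj_unique y z1 z2 : adjoint_graph ip T y z1 -> adjoint_graph ip T y z2 -> z1 = z2.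
Proof.
move=> h1 h2; apply/eqP; rewrite -subr_eq0; apply/eqP/dense_orth => x hx.
by rewrite (ipBr Hip) -h1 // -h2 // subrr.
Qed.
End Adjoint.

Section ShiftedRange.
Variables (R : realType) (V : lmodType R[i]) (ip : V -> V -> R[i]).
Hypotheses (Hip : is_inner_product ip) (Hcompl : hilbert_complete ip).
Local Notation sq := (sqnorm ip).
Variable T : operator V.
Hypotheses (HTlin : is_linear_operator T) (HTsym : symmetric_operator ip T)
  (HTclosed : closed_operator ip T).
Variable c : R[i].
Hypotheses (hc : conjc c = - c) (hc2 : c * c = -1).

Lemma sq_shift x : dom T x -> sq (app T x + c *: x) = sq (app T x) + sq x.
Proof.
move=> hx; rewrite (sqD Hip) (sqZ Hip) (ipZr Hip) hc.
have -> : normc2 c = 1 by rewrite /normc2 hc mulrN hc2 opprK.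
have hr : conjc (ip (app T x) x) = ip (app T x) x by rewrite -(ipC Hip) HTsym.
rewrite (conjc_fixed_real hr) mulNr ReN Re_mul_real (conjc_eqN_Re0 hc).
by rewrite mul0r oppr0 mulr0 addr0 mul1r.
Qed.

Lemma shift_sub x y : dom T x -> dom T y ->
  (app T x + c *: x) - (app T y + c *: y) = app T (x - y) + c *: (x - y).
Proof.
move=> hx hy; rewrite appB // scalerBr opprD !addrA; congr (_ + _).
by rewrite addrAC.
Qed.

Lemma shift_range_closed u l : (forall n, exists2 x, dom T x & u n = app T x + c *: x) ->
  converges_to ip u l -> exists2 x, dom T x & l = app T x + c *: x.
Proof.
move=> hu hl.
have [xs hxs] : exists xs : nat -> V, forall n, dom T (xs n) /\ u n = app T (xs n) + c *: xs n.
  by apply: (choice (fun n x => dom T x /\ u n = app T x + c *: x)) => n; have [x] := hu n; exists x.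
have hdomx n : dom T (xs n) by case: (hxs n).
have hdiff p q : sq (xs p - xs q) <= sq (u p - u q) /\
    sq (app T (xs p) - app T (xs q)) <= sq (u p - u q).
  rewrite (hxs p).2 (hxs q).2 shift_sub // sq_shift; last exact: domB.
  rewrite (appB HTlin) //.
  by have := sq_ge0 Hip (xs p - xs q); have := sq_ge0 Hip (app T (xs p) - app T (xs q)); lra.
have hcu := cvg_cauchy Hip hl.
have [xl hxl] : exists xl, converges_to ip xs xl.
  apply: Hcompl => e he; have [N hN] := hcu e he.
  by exists N => p q hp hq; apply: le_lt_trans (hN p q hp hq); exact: (hdiff p q).1.
have [yl hyl] : exists yl, converges_to ip (fun n => app T (xs n)) yl.
  apply: Hcompl => e he; have [N hN] := hcu e he.
  by exists N => p q hp hq; apply: le_lt_trans (hN p q hp hq); exact: (hdiff p q).2.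
have [hdl happ] := HTclosed hdomx hxl hyl.
exists xl => //; rewrite happ; apply: (cvg_unique Hip hl).
move=> e he; have [N hN] := cvgDZ Hip c hyl hxl he.
by exists N => n hn; rewrite (hxs n).2; apply: hN.
Qed.

Lemma shift_orth_decomp w : exists x r, [/\ dom T x,
  (forall x', dom T x' -> ip (app T x' + c *: x') r = 0) & w = app T x + c *: x + r].
Proof.
pose M := fun m => exists2 x, dom T x & m = app T x + c *: x.
have M0 : M 0 by exists 0; [exact: dom0 | rewrite (app0 HTlin) scaler0 addr0].
have ML a m m' : M m -> M m' -> M (a *: m + m').
  case=> x hx -> [x' hx' ->]; exists (a *: x + x'); first exact: domL.
  by rewrite appL // scalerDr scalerA mulrC -scalerA addrACA -scalerDr.
have [m [x hx ->] horth] := orth_projection Hip Hcompl M0 ML shift_range_closed w.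
exists x, (w - (app T x + c *: x)); split => //; last by rewrite addrC subrK.
by move=> x' hx'; apply: horth; exists x'.
Qed.
End ShiftedRange.

Section DefectSpaces.
Variables (R : realType) (V : lmodType R[i]) (ip : V -> V -> R[i]).
Hypothesis Hip : is_inner_product ip.
Local Notation sq := (sqnorm ip).
Local Notation I := ('i%C : R[i]).
Variable S : operator V.
Hypotheses (HSlin : is_linear_operator S) (HSsym : symmetric_operator ip S).

Lemma adjoint_graph_dom u : dom S u -> adjoint_graph ip S u (app S u).
Proof. by move=> hu x hx; apply: HSsym. Qed.

Lemma defect_iP f : defect_i ip S f <-> adjoint_graph ip S f (- I *: f).
Proof.
split=> h x hx; last by rewrite (ipBl Hip) (ipZl Hip) h // (ipZr Hip) conjcN conjc_i opprK subrr.
have := h x hx; rewrite (ipBl Hip) (ipZl Hip) (ipZr Hip) conjcN conjc_i opprK.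
by move/eqP; rewrite subr_eq0 => /eqP.
Qed.

Lemma defect_miP f : defect_mi ip S f <-> adjoint_graph ip S f (I *: f).
Proof.
split=> h x hx; last by rewrite (ipDl Hip) (ipZl Hip) h // (ipZr Hip) conjc_i mulNr addNr.
have := h x hx; rewrite (ipDl Hip) (ipZl Hip) (ipZr Hip) conjc_i.
by move/eqP; rewrite addr_eq0 mulNr => /eqP.
Qed.

Lemma defect_iL a f g : defect_i ip S f -> defect_i ip S g -> defect_i ip S (a *: f + g).
Proof. by move=> hf hg x hx; rewrite (ipDr Hip) (ipZr Hip) hf // hg // mulr0 addr0. Qed.
Lemma defect_miL a f g : defect_mi ip S f -> defect_mi ip S g -> defect_mi ip S (a *: f + g).
Proof. by move=> hf hg x hx; rewrite (ipDr Hip) (ipZr Hip) hf // hg // mulr0 addr0. Qed.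
Lemma defect_i0 : defect_i ip S 0. Proof. by move=> x _; rewrite (ip0r Hip). Qed.
Lemma defect_mi0 : defect_mi ip S 0. Proof. by move=> x _; rewrite (ip0r Hip). Qed.
Lemma defect_iZ a f : defect_i ip S f -> defect_i ip S (a *: f).
Proof. by move=> hf; rewrite -(addr0 (a *: f)); apply: defect_iL hf defect_i0. Qed.
Lemma defect_miZ a f : defect_mi ip S f -> defect_mi ip S (a *: f).
Proof. by move=> hf; rewrite -(addr0 (a *: f)); apply: defect_miL hf defect_mi0. Qed.
Lemma defect_iB f g : defect_i ip S f -> defect_i ip S g -> defect_i ip S (f - g).
Proof. by move=> hf hg; rewrite -scaleN1r addrC; apply: defect_iL. Qed.
Lemma defect_miB f g : defect_mi ip S f -> defect_mi ip S g -> defect_mi ip S (f - g).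
Proof. by move=> hf hg; rewrite -scaleN1r addrC; apply: defect_miL. Qed.
Lemma defect_miN f : defect_mi ip S f -> defect_mi ip S (- f).
Proof. by move=> hf; rewrite -sub0r; apply: defect_miB defect_mi0 hf. Qed.

Lemma vN_decompE u a b : dom S u -> defect_mi ip S a -> defect_i ip S b ->
  vN_decomp ip S (u + a + b) (u, a, b).
Proof. by split. Qed.

(* The value of [S^*] at [u + f_{-i} + f_i]. *)
Definition adjoint_decomp (t : V * V * V) : V := app S t.1.1 + I *: t.1.2 - I *: t.2.

Lemma adjoint_graph_decomp psi t : vN_decomp ip S psi t ->
  adjoint_graph ip S psi (adjoint_decomp t).
Proof.
case: t => [[u a] b] [/= hu ha hb ->]; rewrite /adjoint_decomp /= -scaleNr.
apply: (adjD Hip); last exact/defect_iP.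
by apply: (adjD Hip); [exact: adjoint_graph_dom | exact/defect_miP].
Qed.

Lemma sq_adjoint_decomp_shift u a b : dom S u -> defect_mi ip S a -> defect_i ip S b ->
  sq (adjoint_decomp (u, a, b) + I *: (u + a + b)) = sq (app S u) + sq u + 4 * sq a.
Proof.
move=> hu ha hb.
have -> : adjoint_decomp (u, a, b) + I *: (u + a + b) = (app S u + I *: u) + (2%:R * I) *: a.
  by apply: (eq_ipr Hip) => t; rewrite /adjoint_decomp /=; ip_expand Hip; ring.
rewrite (sqD Hip) (sq_shift Hip HSsym (conjc_i R) (mulii R) hu) (ipZr Hip) ha // mulr0 /= mulr0 addr0.
by rewrite (sqZ Hip) normc2E /=; congr (_ + _ * _); ring.
Qed.

(* Green's identity for [S^*]: the boundary form only sees the defect components. *)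
Lemma green_formula psi phi t1 t2 : vN_decomp ip S psi t1 -> vN_decomp ip S phi t2 ->
  ip (adjoint_decomp t1) phi - ip psi (adjoint_decomp t2) =
  2%:R * I * (ip t1.1.2 t2.1.2 - ip t1.2 t2.2).
Proof.
case: t1 => [[u a] b] [/= hu ha hb ->]; case: t2 => [[u' a'] b'] [/= hu' ha' hb' ->].
rewrite /adjoint_decomp /=.
have r1 : ip (app S u) u' = ip u (app S u') by apply: HSsym.
have r2 : ip (app S u) a' = ip u (I *: a') := (defect_miP a').1 ha' u hu.
have r3 : ip (app S u) b' = ip u (- I *: b') := (defect_iP b').1 hb' u hu.
have r4 : ip a (app S u') = ip (I *: a) u'.
  by rewrite (ipC Hip (app S u')) ((defect_miP a).1 ha _ hu') -(ipC Hip).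
have r5 : ip b (app S u') = ip (- I *: b) u'.
  by rewrite (ipC Hip (app S u')) ((defect_iP b).1 hb _ hu') -(ipC Hip).
ip_expand Hip; rewrite r1 r2 r3 r4 r5; ip_expand Hip; ring: (mulii R).
Qed.

Lemma defect_i_range_eq0 u d : dom S u -> defect_i ip S d -> app S u - I *: u = d -> d = 0.
Proof. by move=> hu hd e; apply: (ipxx_eq0 Hip); rewrite -{1}e hd. Qed.

Lemma defect_mi_range_eq0 u d : dom S u -> defect_mi ip S d -> app S u + I *: u = d -> d = 0.
Proof. by move=> hu hd e; apply: (ipxx_eq0 Hip); rewrite -{1}e hd. Qed.

Hypothesis HSdense : densely_defined ip S.

Lemma vN_decomp0 u a b : dom S u -> defect_mi ip S a -> defect_i ip S b ->
  u + a + b = 0 -> [/\ u = 0, a = 0 & b = 0].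
Proof.
move=> hu ha hb h0.
have := adjoint_graph_decomp (vN_decompE hu ha hb); rewrite h0 => hadj.
have e0 := adj_unique Hip HSdense hadj (adj0 Hip (T := S)).
have := sq_adjoint_decomp_shift hu ha hb; rewrite e0 h0 scaler0 addr0 (sq0 Hip).
have := sq_ge0 Hip (app S u); have := sq_ge0 Hip u; have := sq_ge0 Hip a => h1 h2 h3 e.
have hu0 : u = 0 by apply: (sq_eq0 Hip); lra.
have ha0 : a = 0 by apply: (sq_eq0 Hip); lra.
by split => //; move: h0; rewrite hu0 ha0 !add0r.
Qed.

Lemma vN_decomp_unique psi t1 t2 : vN_decomp ip S psi t1 -> vN_decomp ip S psi t2 -> t1 = t2.
Proof.
case: t1 => [[u1 a1] b1] [/= hu1 ha1 hb1 e1]; case: t2 => [[u2 a2] b2] [/= hu2 ha2 hb2 e2].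
have e : (u1 - u2) + (a1 - a2) + (b1 - b2) = 0.
  have -> : (u1 - u2) + (a1 - a2) + (b1 - b2) = (u1 + a1 + b1) - (u2 + a2 + b2).
    by apply: (eq_ipr Hip) => t; ip_expand Hip; ring.
  by rewrite -e1 -e2 subrr.
have [hu ha hb] := vN_decomp0 (domB HSlin hu1 hu2) (defect_miB ha1 ha2) (defect_iB hb1 hb2) e.
by rewrite (subr0_eq hu) (subr0_eq ha) (subr0_eq hb).
Qed.

Lemma vN_choose_eq psi t : vN_decomp ip S psi t -> vN_choose ip S psi = t.
Proof.
move=> h; apply: (vN_decomp_unique _ h).
by apply: (epsilon_spec (inhabits (0, 0, 0)) (vN_decomp ip S psi)); exists t.
Qed.

Hypotheses (Hcompl : hilbert_complete ip) (HSclosed : closed_operator ip S).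

Lemma vN_decomp_exists psi : adjoint_dom ip S psi -> exists t, vN_decomp ip S psi t.
Proof.
case=> z hz.
have [x [r [hx hr hw]]] :=
  shift_orth_decomp Hip Hcompl HSlin HSsym HSclosed (conjc_i R) (mulii R) (z + I *: psi).
(* [r] lies in [N_{-i}]; split it as [r = 2 i f_{-i}] to read off the decomposition *)
pose a := - ((2^-1)%:C)%C * I *: r.
have ha : defect_mi ip S a by apply: defect_miZ => y hy; apply: hr.
exists (x, a, psi - x - a); split => //=; last by apply: (eq_ipr Hip) => t; ip_expand Hip; ring.
apply/defect_iP.
have -> : - I *: (psi - x - a) = z - app S x - I *: a.
  have -> : z = app S x + I *: x + r - I *: psi by rewrite -hw addrK.
  have hr2 : r = (2%:C)%C * I *: a.
    rewrite /a scalerA; have -> : (2%:C)%C * I * (- ((2^-1)%:C)%C * I) = 1.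
      by rewrite fmorphV; field: (mulii R).
    by rewrite scale1r.
  by rewrite hr2; apply: (eq_ipr Hip) => t; ip_expand Hip; ring: (mulii R).
by apply: (adjB Hip); [apply: (adjB Hip hz); apply: adjoint_graph_dom | apply/defect_miP].
Qed.
End DefectSpaces.

Section FundamentalSymmetry.
Variables (R : realType) (V : lmodType R[i]) (ip : V -> V -> R[i]).
Hypothesis Hip : is_inner_product ip.
Variable J : V -> V.
Hypothesis HJ : fundamental_symmetry ip J.

Lemma JL a x y : J (a *: x + y) = a *: J x + J y. Proof. by case: HJ. Qed.
Lemma J0 : J 0 = 0.
Proof. by apply: (addrI (J 0)); rewrite -{1}(scale1r (J 0)) -JL scale1r !addr0. Qed.
Lemma JZ a x : J (a *: x) = a *: J x. Proof. by rewrite -(addr0 (a *: x)) JL J0 addr0. Qed.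
Lemma JD x y : J (x + y) = J x + J y. Proof. by rewrite -(scale1r x) JL !scale1r. Qed.
Lemma JN x : J (- x) = - J x. Proof. by rewrite -scaleN1r JZ scaleN1r. Qed.
Lemma JB x y : J (x - y) = J x - J y. Proof. by rewrite JD JN. Qed.
Lemma ip_J x y : ip (J x) y = ip x (J y). Proof. by case: HJ. Qed.
Lemma JK x : J (J x) = x. Proof. by case: HJ. Qed.

Variable S : operator V.
Hypothesis HJS : commutes_with J S.

Lemma dom_J u : dom S u -> dom S (J u). Proof. by move=> h; case: (HJS h). Qed.
Lemma app_J u : dom S u -> app S (J u) = J (app S u). Proof. by move=> h; case: (HJS h). Qed.

Lemma defect_i_J f : defect_i ip S f -> defect_i ip S (J f).
Proof. by move=> hf x hx; rewrite -ip_J JB JZ -app_J // hf //; apply: dom_J. Qed.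
Lemma defect_mi_J f : defect_mi ip S f -> defect_mi ip S (J f).
Proof. by move=> hf x hx; rewrite -ip_J JD JZ -app_J // hf //; apply: dom_J. Qed.
Lemma adjoint_graph_J y z : adjoint_graph ip S y z -> adjoint_graph ip S (J y) (J z).
Proof. by move=> h x hx; rewrite -ip_J -app_J // h ?ip_J ?JK //; apply: dom_J. Qed.
Lemma vN_decomp_J psi u a b : vN_decomp ip S psi (u, a, b) ->
  vN_decomp ip S (J psi) (J u, J a, J b).
Proof.
case=> /= hu ha hb ->; split => /=; [exact: dom_J | exact: defect_mi_J | exact: defect_i_J |].
by rewrite !JD.
Qed.

Hypotheses (Hcompl : hilbert_complete ip) (HSlin : is_linear_operator S)
  (HSdense : densely_defined ip S) (HSclosed : closed_operator ip S)
  (HSsym : symmetric_operator ip S).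

Lemma Gamma_J_commuteP (Q : V -> V) :
  (forall f, defect_i ip S f -> Q (J f) = J (Q f)) <->
  (forall psi, adjoint_dom ip S psi ->
     Gamma0 ip S Q (J psi) = J (Gamma0 ip S Q psi) /\
     Gamma1 ip S Q (J psi) = J (Gamma1 ip S Q psi)).
Proof.
have vN_chooseE := vN_choose_eq Hip HSlin HSsym HSdense.
split=> [HQJ psi hpsi | HG f hf].
  have [[[u a] b] ht] := vN_decomp_exists Hip HSlin HSsym Hcompl HSclosed hpsi.
  rewrite /Gamma0 /Gamma1 (vN_chooseE _ _ ht) (vN_chooseE _ _ (vN_decomp_J ht)) /=.
  by case: ht => _ _ hb _; rewrite HQJ // JD JB !JZ.
have hdecomp g : defect_i ip S g -> vN_decomp ip S g (0, 0, g).
  by move=> hg; split; rewrite /= ?add0r //; [exact: dom0 | exact: defect_mi0].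
have hadj : adjoint_dom ip S f by exists (- 'i%C *: f); apply/defect_iP.
have := (HG f hadj).1; rewrite /Gamma0 (vN_chooseE _ _ (hdecomp _ hf)).
by rewrite (vN_chooseE _ _ (hdecomp _ (defect_i_J hf))) /= !add0r.
Qed.
End FundamentalSymmetry.

Section SelfAdjoint.
Variables (R : realType) (V : lmodType R[i]) (ip : V -> V -> R[i]).
Hypothesis Hip : is_inner_product ip.
Variable A : operator V.
Hypothesis HAsa : self_adjoint ip A.

Lemma self_adjoint_sym : symmetric_operator ip A.
Proof. by move=> x y hx hy; apply: (HAsa y (app A y)).2. Qed.

Lemma self_adjoint_closed : closed_operator ip A.
Proof.
move=> u x y hu hx hy.
have /(HAsa x y) [hdx ->] // : adjoint_graph ip A x y.
by apply: (adjoint_graph_closed Hip _ hx hy) => n; apply/(HAsa _ _).2.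
Qed.

Hypotheses (HAlin : is_linear_operator A) (Hcompl : hilbert_complete ip).

(* [A + c] is onto for [c = +-i]: the orthogonal remainder would be an eigenvector of the
   self-adjoint [A] with the non-real eigenvalue [c]. *)
Lemma self_adjoint_shift_onto (c : R[i]) : conjc c = - c -> c * c = -1 ->
  forall w, exists2 x, dom A x & w = app A x + c *: x.
Proof.
move=> hc hc2 w.
have [x [r [hx hr ->]]] :=
  shift_orth_decomp Hip Hcompl HAlin self_adjoint_sym self_adjoint_closed hc hc2 w.
have hadj : adjoint_graph ip A r (c *: r).
  move=> x' hx'; have := hr x' hx'; rewrite (ipDl Hip) (ipZl Hip) (ipZr Hip) hc.
  by move/eqP; rewrite addr_eq0 => /eqP ->; rewrite mulNr.
have [hrA er] := (HAsa r (c *: r)).1 hadj.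
have hs := self_adjoint_sym hrA hrA; rewrite -er (ipZl Hip) (ipZr Hip) hc in hs.
have /eqP : 2%:R * ip r r = 0.
  have -> : 2%:R * ip r r = (- c * ip r r) * c - (c * ip r r) * c by ring: hc2.
  by rewrite -hs subrr.
rewrite mulf_eq0 pnatr_eq0 /= => /eqP /(ipxx_eq0 Hip) ->.
by exists x; rewrite // addr0.
Qed.
End SelfAdjoint.

Section VonNeumannExtension.
Variables (R : realType) (V : lmodType R[i]) (ip : V -> V -> R[i]).
Hypotheses (Hip : is_inner_product ip) (Hcompl : hilbert_complete ip).
Local Notation I := ('i%C : R[i]).
Variable S : operator V.
Hypotheses (HSlin : is_linear_operator S) (HSdense : densely_defined ip S)
  (HSclosed : closed_operator ip S) (HSsym : symmetric_operator ip S).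
Variable Q : V -> V.
Hypothesis HQ : unitary_defect ip S Q.

Definition vN_ext_dom (y : V) : Prop :=
  exists u f, [/\ dom S u, defect_i ip S f & y = u - Q f + f].

(* The restriction of [S^*] to [D(S) + (I - Q) N_i]. *)
Definition vN_ext : operator V :=
  Operator vN_ext_dom (fun y => epsilon (inhabits 0) (adjoint_graph ip S y)).

Lemma Q_linear a f g : defect_i ip S f -> defect_i ip S g -> Q (a *: f + g) = a *: Q f + Q g.
Proof. by case: HQ => h _ _ _; apply: h. Qed.
Lemma Q_defect f : defect_i ip S f -> defect_mi ip S (Q f).
Proof. by case: HQ => _ h _ _; apply: h. Qed.
Lemma Q_isometry f g : defect_i ip S f -> defect_i ip S g -> ip (Q f) (Q g) = ip f g.
Proof. by case: HQ => _ _ h _; apply: h. Qed.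
Lemma Q0 : Q 0 = 0.
Proof.
have h0 := @defect_i0 _ _ _ Hip S.
have := Q_linear 1 h0 h0; rewrite !scale1r addr0 => /eqP.
by rewrite -subr_eq0 opprD addrA subrr sub0r oppr_eq0 => /eqP.
Qed.

Lemma vN_ext_decomp u f : dom S u -> defect_i ip S f ->
  vN_decomp ip S (u - Q f + f) (u, - Q f, f).
Proof. by move=> hu hf; split => //; apply/defect_miN/Q_defect. Qed.

Lemma vN_ext_appE u f : dom S u -> defect_i ip S f ->
  app vN_ext (u - Q f + f) = adjoint_decomp S (u, - Q f, f).
Proof.
move=> hu hf; have hadj := adjoint_graph_decomp Hip HSsym (vN_ext_decomp hu hf).
apply: (adj_unique Hip HSdense _ hadj).
by apply: (epsilon_spec (inhabits 0) (adjoint_graph ip S _)); exists (adjoint_decomp S (u, - Q f, f)).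
Qed.

Lemma vN_ext_adjoint y : dom vN_ext y -> adjoint_graph ip S y (app vN_ext y).
Proof.
case=> u [f [hu hf ->]]; rewrite vN_ext_appE //.
exact (adjoint_graph_decomp Hip HSsym (vN_ext_decomp hu hf)).
Qed.

Lemma vN_ext_dom_S u : dom S u -> dom vN_ext u.
Proof. by move=> hu; exists u, 0; split; rewrite ?Q0 ?subr0 ?addr0 //; apply: defect_i0. Qed.

Lemma vN_ext_extends : extends vN_ext S.
Proof.
move=> x hx; split; first exact: vN_ext_dom_S.
exact (adj_unique Hip HSdense (vN_ext_adjoint (vN_ext_dom_S hx)) (adjoint_graph_dom HSsym hx)).
Qed.

Lemma vN_ext_linear : is_linear_operator vN_ext.
Proof.
split; first by apply/vN_ext_dom_S/dom0.
move=> a _ _ [u [f [hu hf ->]]] [u' [f' [hu' hf' ->]]].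
have hdom : dom vN_ext (a *: (u - Q f + f) + (u' - Q f' + f')).
  exists (a *: u + u'), (a *: f + f'); split; [exact: domL | exact: defect_iL |].
  by rewrite Q_linear //; apply: (eq_ipr Hip) => t; ip_expand Hip; ring.
split => //; apply: (adj_unique Hip HSdense (vN_ext_adjoint hdom)).
by apply: (adjL Hip); apply: vN_ext_adjoint; [exists u, f | exists u', f'].
Qed.

Lemma vN_ext_green u f psi t : dom S u -> defect_i ip S f -> vN_decomp ip S psi t ->
  ip (app vN_ext (u - Q f + f)) psi - ip (u - Q f + f) (adjoint_decomp S t) =
  - (2%:R * I) * (ip (Q f) t.1.2 + ip f t.2).
Proof.
move=> hu hf ht; rewrite vN_ext_appE // (green_formula Hip HSsym (vN_ext_decomp hu hf) ht) /=.
by rewrite (ipNl Hip); ring.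
Qed.

Lemma vN_ext_self_adjoint : self_adjoint ip vN_ext.
Proof.
move=> y z; split => [hyz | [[u [f [hu hf ->]]] ->] x [u' [f' [hu' hf' ->]]]].
- have hyzS : adjoint_graph ip S y z.
    move=> x hx; have [hxA <-] := vN_ext_extends hx; exact: hyz.
  have [[[u a] b] ht] := vN_decomp_exists Hip HSlin HSsym Hcompl HSclosed (ex_intro _ z hyzS).
  have ez := adj_unique Hip HSdense hyzS (adjoint_graph_decomp Hip HSsym ht).
  case: (ht) => /= hu ha hb ey.
  (* [a + Q b] is orthogonal to [Q N_i = N_{-i}], hence zero *)
  have horth g : defect_i ip S g -> ip (Q g) (a + Q b) = 0.
    move=> hg; have := vN_ext_green (dom0 HSlin) hg ht; rewrite -ez hyz; last by exists 0, g; split => //; apply: dom0.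
    rewrite subrr /= => /esym /eqP; rewrite mulf_eq0 oppr_eq0 (negbTE (two_i_neq0 R)) /= addr_eq0.
    by rewrite -(Q_isometry hg hb) -(ipNr Hip) => /eqP h; rewrite (ipDr Hip) h (ipNr Hip) addNr.
  have hab : defect_mi ip S (a + Q b) by rewrite -[a]scale1r; apply: defect_miL ha (Q_defect hb).
  have [g hg eg] : exists2 g, defect_i ip S g & Q g = a + Q b by case: HQ => _ _ _; apply.
  have e0 : a + Q b = 0 by apply: (ipxx_eq0 Hip); rewrite -{1}eg horth.
  have ea : a = - Q b by apply/eqP; rewrite -addr_eq0 e0.
  have hdy : dom vN_ext y by exists u, b; split => //; rewrite ey ea.
  by split => //; exact (esym (adj_unique Hip HSdense (vN_ext_adjoint hdy) hyzS)).
- have := vN_ext_green hu' hf' (vN_ext_decomp hu hf); rewrite -vN_ext_appE //.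
  by rewrite (ipNr Hip) Q_isometry // addNr mulr0 => /eqP; rewrite subr_eq0 => /eqP ->.
Qed.

Variable J : V -> V.
Hypotheses (HJ : fundamental_symmetry ip J) (HJS : commutes_with J S).

Lemma vN_ext_commutes : (forall f, defect_i ip S f -> Q (J f) = J (Q f)) ->
  commutes_with J vN_ext.
Proof.
move=> HQJ y hy; have hJy : dom vN_ext (J y).
  case: hy => u [f [hu hf ->]]; exists (J u), (J f).
  by split; [exact: dom_J | exact: defect_i_J | rewrite !(JD HJ) (JN HJ) HQJ].
split => //; apply: (adj_unique Hip HSdense (vN_ext_adjoint hJy)).
exact (adjoint_graph_J HJ HJS (vN_ext_adjoint hy)).
Qed.
End VonNeumannExtension.

Section ExtensionBoundary.
Variables (R : realType) (V : lmodType R[i]) (ip : V -> V -> R[i]).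
Hypotheses (Hip : is_inner_product ip) (Hcompl : hilbert_complete ip).
Local Notation I := ('i%C : R[i]).
Variable S : operator V.
Hypotheses (HSlin : is_linear_operator S) (HSdense : densely_defined ip S)
  (HSclosed : closed_operator ip S) (HSsym : symmetric_operator ip S).
Variable A : operator V.
Hypotheses (HAlin : is_linear_operator A) (HAext : extends A S) (HAsa : self_adjoint ip A).

(* [ext_graph b a] says that [a] is the [N_{-i}]-component paired with [b] in [D(A)];
   by von Neumann's theory this is the graph of [- Q] for a unitary [Q]. *)
Definition ext_graph (b a : V) : Prop :=
  defect_mi ip S a /\ exists2 u, dom S u & dom A (u + a + b).

Definition ext_Q (b : V) : V := - epsilon (inhabits 0) (ext_graph b).

Lemma ext_adjoint y : dom A y -> adjoint_graph ip S y (app A y).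
Proof. by move=> hy x hx; have [hxA <-] := HAext hx; apply: (self_adjoint_sym HAsa). Qed.

Lemma ext_appE u a b : dom S u -> defect_mi ip S a -> defect_i ip S b ->
  dom A (u + a + b) -> app A (u + a + b) = adjoint_decomp S (u, a, b).
Proof.
move=> hu ha hb hy; apply: (adj_unique Hip HSdense (ext_adjoint hy)).
exact (adjoint_graph_decomp Hip HSsym (vN_decompE hu ha hb)).
Qed.

Lemma ext_graph_isometry b a b' a' : defect_i ip S b -> defect_i ip S b' ->
  ext_graph b a -> ext_graph b' a' -> ip a a' = ip b b'.
Proof.
move=> hb hb' [ha [u hu hy]] [ha' [u' hu' hy']].
have := green_formula Hip HSsym (vN_decompE hu ha hb) (vN_decompE hu' ha' hb').
rewrite -ext_appE // -ext_appE // (self_adjoint_sym HAsa) // subrr /= => /esym /eqP.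
by rewrite mulf_eq0 (negbTE (two_i_neq0 R)) /= subr_eq0 => /eqP.
Qed.

Lemma ext_graph_linear k b a b' a' :
  ext_graph b a -> ext_graph b' a' -> ext_graph (k *: b + b') (k *: a + a').
Proof.
move=> [ha [u hu hy]] [ha' [u' hu' hy']]; split; first exact: defect_miL.
exists (k *: u + u'); first exact: domL.
have -> : k *: u + u' + (k *: a + a') + (k *: b + b') = k *: (u + a + b) + (u' + a' + b').
  by apply: (eq_ipr Hip) => t; ip_expand Hip; ring.
exact: domL.
Qed.

Lemma ext_graph_functional b a a' : defect_i ip S b -> ext_graph b a -> ext_graph b a' -> a = a'.
Proof.
move=> hb h h'; have := ext_graph_linear (-1) h h'; rewrite !scaleN1r addNr => h0.
have hb0 := @defect_i0 _ _ _ Hip S.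
have := ext_graph_isometry hb0 hb0 h0 h0; rewrite (ip0l Hip) => /(ipxx_eq0 Hip).
by move/eqP; rewrite addrC subr_eq0 => /eqP.
Qed.

Lemma ext_app_shift y c u a b : dom A y -> vN_decomp ip S y (u, a, b) ->
  app A y + c *: y = (app S u + c *: u) + (I + c) *: a + (c - I) *: b.
Proof.
move=> hy ht; case: (ht) => /= hu ha hb ey.
have -> : app A y = adjoint_decomp S (u, a, b) by move: hy; rewrite ey; apply: ext_appE.
rewrite /adjoint_decomp /= ey.
by apply: (eq_ipr Hip) => t; ip_expand Hip; ring.
Qed.

Lemma ext_graph_total b : defect_i ip S b -> exists a, ext_graph b a.
Proof.
move=> hb; have hc : conjc (- I) = - - I by rewrite conjcN conjc_i.
have [y hy ew] := self_adjoint_shift_onto Hip HAsa HAlin Hcompl hc (etrans (mulrNN I I) (mulii R))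
  ((- (2%:R * I)) *: b).
have [[[u a] b'] ht] := vN_decomp_exists Hip HSlin HSsym Hcompl HSclosed (ex_intro _ _ (ext_adjoint hy)).
case: (ht) => /= hu ha hb' ey.
have e : app S u - I *: u = (2%:R * I) *: (b' - b).
  have := ext_app_shift (- I) hy ht; rewrite -ew addrN scale0r addr0 => hE.
  rewrite scalerBr -scaleNr hE.
  by apply: (eq_ipr Hip) => t; ip_expand Hip; ring.
have /eqP := defect_i_range_eq0 Hip hu (defect_iZ Hip _ (defect_iB Hip hb' hb)) e.
rewrite scaler_eq0 (negbTE (two_i_neq0 R)) /= subr_eq0 => /eqP eb.
by exists a; split => //; exists u => //; rewrite -eb -ey.
Qed.

Lemma ext_graph_onto h : defect_mi ip S h -> exists2 b, defect_i ip S b & ext_graph b h.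
Proof.
move=> hh; have [y hy ew] := self_adjoint_shift_onto Hip HAsa HAlin Hcompl (conjc_i R) (mulii R)
  ((2%:R * I) *: h).
have [[[u a] b] ht] := vN_decomp_exists Hip HSlin HSsym Hcompl HSclosed (ex_intro _ _ (ext_adjoint hy)).
case: (ht) => /= hu ha hb ey.
have e : app S u + I *: u = (2%:R * I) *: (h - a).
  have := ext_app_shift I hy ht; rewrite -ew subrr scale0r addr0 => hE.
  rewrite scalerBr hE.
  by apply: (eq_ipr Hip) => t; ip_expand Hip; ring.
have /eqP := defect_mi_range_eq0 Hip hu (defect_miZ Hip _ (defect_miB Hip hh ha)) e.
rewrite scaler_eq0 (negbTE (two_i_neq0 R)) /= subr_eq0 => /eqP ea.
by exists b => //; split => //; exists u => //; rewrite ea -ey.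
Qed.
Lemma ext_Q_graph b : defect_i ip S b -> ext_graph b (- ext_Q b).
Proof.
by move=> hb; rewrite opprK; apply: (epsilon_spec (inhabits 0) (ext_graph b)); apply: ext_graph_total.
Qed.

Lemma ext_QE b a : defect_i ip S b -> ext_graph b a -> ext_Q b = - a.
Proof. by move=> hb h; rewrite (ext_graph_functional hb h (ext_Q_graph hb)) opprK. Qed.

Lemma ext_Q_unitary : unitary_defect ip S ext_Q.
Proof.
split=> [k f g hf hg | f hf | f g hf hg | h hh].
- rewrite (ext_QE (defect_iL Hip k hf hg) (ext_graph_linear k (ext_Q_graph hf) (ext_Q_graph hg))).
  by rewrite opprD scalerN !opprK.
- by rewrite -[ext_Q f]opprK; apply/(defect_miN Hip)/((ext_Q_graph hf).1).
- by rewrite -(ext_graph_isometry hf hg (ext_Q_graph hf) (ext_Q_graph hg)) (ipNl Hip) (ipNr Hip) opprK.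
- have [b hb hG] := ext_graph_onto (defect_miN Hip hh).
  by exists b => //; rewrite (ext_QE hb hG) opprK.
Qed.

Variable J : V -> V.
Hypotheses (HJ : fundamental_symmetry ip J) (HJS : commutes_with J S) (HJA : commutes_with J A).

Lemma ext_graph_J b a : ext_graph b a -> ext_graph (J b) (J a).
Proof.
move=> [ha [u hu hy]]; split; first exact: defect_mi_J.
by exists (J u); [exact: dom_J | rewrite -!(JD HJ); case: (HJA hy)].
Qed.

Lemma ext_Q_J b : defect_i ip S b -> ext_Q (J b) = J (ext_Q b).
Proof.
move=> hb; rewrite (ext_QE (defect_i_J HJ HJS hb) (ext_graph_J (ext_Q_graph hb))).
by rewrite (JN HJ) opprK.
Qed.
End ExtensionBoundary.

Unset Implicit Arguments.

Theorem proposition2p3 (R : realType) (V : lmodType R[i]) (ip : V -> V -> R[i])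
    (Hip : is_inner_product ip) (Hcompl : hilbert_complete ip)
    (S : operator V)
    (HSlin : is_linear_operator S) (HSdense : densely_defined ip S)
    (HSclosed : closed_operator ip S) (HSsym : symmetric_operator ip S)
    (HSdef : equal_deficiency_indices ip S)
    (J : V -> V) (HJ : fundamental_symmetry ip J) (HJS : commutes_with J S) :
  (exists Q : V -> V, unitary_defect ip S Q /\
     (forall psi, adjoint_dom ip S psi ->
        Gamma0 ip S Q (J psi) = J (Gamma0 ip S Q psi) /\
        Gamma1 ip S Q (J psi) = J (Gamma1 ip S Q psi)))
  <->
  (exists A : operator V, is_linear_operator A /\ extends A S /\
     self_adjoint ip A /\ commutes_with J A).
Proof.
have GammaP Q := Gamma_J_commuteP Hip HJ HJS Hcompl HSlin HSdense HSclosed HSsym Q.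
split=> [[Q [HQ /GammaP HQJ]] | [A [HAlin [HAext [HAsa HJA]]]]].
- exists (vN_ext ip S Q); split; first exact: vN_ext_linear.
  split; first exact: vN_ext_extends.
  split; first exact: vN_ext_self_adjoint.
  exact: vN_ext_commutes.
- exists (ext_Q ip S A); split; first exact: ext_Q_unitary.
  by apply/GammaP; apply: ext_Q_J.
Qed.
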